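(* Assume $(X,T)$ is topologically mixing and $\phi$ satisfies (H2). Let $a\in\mathcal W^1$, $N\in\mathbb N$ with $\Omega^*=\{\omega\in\Omega_a:N_{aa}(\omega)\le N\}$ of positive measure. Then for a.e. $\omega\in\Omega^*$ and all $m,n\ge N$ with $\theta^m\omega,\theta^{m+n}\omega\in\Omega^*$, $$\mathcal Z^\omega_m(a)\,\mathcal Z^{\theta^m\omega}_n(a)\le B_{\theta^m\omega}\,\mathcal Z^\omega_{m+n}(a).$$
   Context: Let $(\Omega,\mathcal F,P)$ be a probability space and $\theta:\Omega\to\Omega$ an invertible, bimeasurable, $P$-preserving, ergodic map. Let $\ell:\Omega\to\mathbb N\cup\{\infty\}$ be measurable with $\ell_\omega>1$, and for a.e. $\omega$ let $A_\omega=(\alpha_{ij}(\omega))_{0\le i<\ell_\omega,\,0\le j<\ell_{\theta\omega}}$ be a $\{0,1\}$-matrix depending measurably on $\omega$ such that every row contains an entry $1$. Put $X_\omega=\{x=(x_0,x_1,\dots): x_i<\ell_{\theta^i\omega},\ \alpha_{x_ix_{i+1}}(\theta^i\omega)=1\ \forall i\ge0\}$, $T_\omega:X_\omega\to X_{\theta\omega}$ the left shift, $T^n_\omega=T_{\theta^{n-1}\omega}\circ\cdots\circ T_\omega$. A word $w=(w_0,\dots,w_{n-1})$ is $\omega$-admissible if $w_i<\ell_{\theta^i\omega}$ for all $i<n$ and $\alpha_{w_iw_{i+1}}(\theta^i\omega)=1$ for $i<n-1$; $\mathcal W^n_\omega$ is the set of such words of length $n$; $[w]_\omega=\{x\in X_\omega: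 x_i=w_i,\ i<n\}$; $\Omega_w=\{\omega: w\in\mathcal W^n_\omega\}$; $\mathcal W^n$ is the set of words $w$ of length $n$ with $P(\Omega_w)>0$. $(X,T)$ is topologically mixing if for all $a,b\in\mathcal W^1$ there is an $\mathbb N$-valued random variable $N_{ab}$ with $[a]_\omega\cap(T^n_\omega)^{-1}[b]_{\theta^n\omega}\ne\emptyset$ whenever $\omega\in\Omega_a$, $n\ge N_{ab}(\omega)$, $\theta^n\omega\in\Omega_b$. A potential is a measurable $\phi:X\to\mathbb R$, $(\omega,x)\mapsto\phi^\omega(x)$; $\phi^\omega_n(x)=\sum_{k=0}^{n-1}\phi^{\theta^k\omega}(T^k_\omega x)$; $V^\omega_n(\phi)=\sup\{|\phi^\omega(x)-\phi^\omega(y)|: x_i=y_i\ (i<n)\}$. $\phi$ is $k$-Hölder if there are $r\in(0,1)$ and a random variable $\kappa\ge1$ with $\int\log\kappa\,dP<\infty$ and $V^\omega_j(\phi)\le\kappa(\omega)r^j$ for all $j\ge k$, a.e. $\omega$; then $B_\omega:=\exp\sum_{j\ge1}\kappa(\theta^{-j}\omega)r^j$. (H2): $\phi$ is 2-Hölder and $\int\log B_\omega\,dP<\infty$. $L^{\omega,n}_\phi$ denotes the $n$-fold Ruelle operator, $L^{\omega,n}_\phi f(x)=\sum_{y\in X_\omega,T^n_\omega y=x}e^{\phi^\omega_n(y)}f(y)$. For $a\in\mathcal W^1$, $\omega\in\Omega_a$: $\mathcal W^n_\omega(a,a)=\{w\in\mathcal W^n_\omega: w_0=a,\ \alpha_{w_{n-1}a}(\theta^{n-1}\omega)=1\}$;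 fix a measurable family $\xi_\omega\in X_\omega$ with $\xi_\omega\in[a]_\omega$ for $\omega\in\Omega_a$; $\tau_w$ is the inverse of $T^n_\omega|_{[w]_\omega}$; $\mathcal Z^\omega_n(a)=\sum_{w\in\mathcal W^n_\omega(a,a)}e^{\phi^\omega_n(\tau_w(\xi_{\theta^n\omega}))}=L^{\omega,n}_\phi(1_{[a]_\omega})(\xi_{\theta^n\omega})$. *)

From HB Require Import structures.
From mathcomp Require Import all_boot all_order all_algebra.
From mathcomp Require Import all_classical all_reals all_analysis.
Set Implicit Arguments. Unset Strict Implicit. Unset Printing Implicit Defensive.
Import Order.TTheory GRing.Theory Num.Theory.
Local Open Scope classical_set_scope.
Local Open Scope ring_scope.

(* Alphabet sizes ℓ_ω ∈ ℕ ∪ {∞}: [None] encodes ∞. *)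
Definition lt_ell (l : option nat) (i : nat) : Prop :=
  match l with None => True | Some n => (i < n)%N end.
Definition gt1_ell (l : option nat) : Prop :=
  match l with None => True | Some n => (1 < n)%N end.

Section Defs.
Context {d : measure_display} {Omega : measurableType d} {R : realType}.

Definition Omega_sym (ell : Omega -> option nat) (a : nat) : set Omega :=
  [set w | lt_ell (ell w) a].

Definition Xfib (theta : Omega -> Omega) (ell : Omega -> option nat)
  (alpha : Omega -> nat -> nat -> bool) (w : Omega) : set (nat -> nat) :=
  [set x | forall i, lt_ell (ell (iter i theta w)) (x i) /\
                     alpha (iter i theta w) (x i) (x i.+1)].

Definition Xtot theta ell alpha : set (Omega * (nat -> nat)) :=
  [set p | Xfib theta ell alpha p.1 p.2].

Definition admissible (theta : Omega -> Omega) (ell : Omega -> option nat)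
  (alpha : Omega -> nat -> nat -> bool) (w : Omega) (u : seq nat) : Prop :=
  forall i, (i < size u)%N ->
    lt_ell (ell (iter i theta w)) (nth 0%N u i) /\
    ((i.+1 < size u)%N -> alpha (iter i theta w) (nth 0%N u i) (nth 0%N u i.+1)).

Definition Waa theta ell alpha (w : Omega) (n a : nat) : set (seq nat) :=
  [set u | size u = n /\ admissible theta ell alpha w u /\ nth 0%N u 0 = a /\
           alpha (iter n.-1 theta w) (nth 0%N u n.-1) a].

Definition shiftk (k : nat) (x : nat -> nat) : nat -> nat := fun i => x (i + k)%N.

Definition birk (theta : Omega -> Omega) (phi : Omega -> (nat -> nat) -> R)
  (w : Omega) (n : nat) (x : nat -> nat) : R :=
  \sum_(k < n) phi (iter k theta w) (shiftk k x).

Definition tau (u : seq nat) (x : nat -> nat) : nat -> nat :=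
  fun i => if (i < size u)%N then nth 0%N u i else x (i - size u)%N.

Definition Zpart theta ell alpha (phi : Omega -> (nat -> nat) -> R)
  (xi : Omega -> nat -> nat) (a : nat) (w : Omega) (n : nat) : \bar R :=
  (\esum_(u in Waa theta ell alpha w n a)
     (expR (birk theta phi w n (tau u (xi (iter n theta w)))))%:E)%E.

Definition Var theta ell alpha (phi : Omega -> (nat -> nat) -> R)
  (w : Omega) (n : nat) : \bar R :=
  ereal_sup [set e | exists x y, Xfib theta ell alpha w x /\ Xfib theta ell alpha w y /\
       (forall i, (i < n)%N -> x i = y i) /\ e = (`|phi w x - phi w y|)%:E].

Definition logB (thetainv : Omega -> Omega) (kappa : Omega -> R) (r : R)
  (w : Omega) : \bar R :=
  (\sum_(1 <= j <oo) (kappa (iter j thetainv w) * r ^+ j)%:E)%E.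

Definition Bfac thetainv kappa r w : \bar R := expeR (logB thetainv kappa r w).

Definition cyl_gen : set (set (nat -> nat)) :=
  [set C | exists i k, C = [set x | x i = k]].
Definition prod_gen : set (set (Omega * (nat -> nat))) :=
  [set C | exists A i k, measurable A /\ C = [set p | A p.1 /\ p.2 i = k]].
Definition cyl_measurable : set (set (nat -> nat)) := smallest (sigma_algebra setT) cyl_gen.
Definition prod_measurable : set (set (Omega * (nat -> nat))) :=
  smallest (sigma_algebra setT) prod_gen.

Definition potential_measurable theta ell alpha (phi : Omega -> (nat -> nat) -> R) :=
  forall B : set R, measurable B ->
    prod_measurable (Xtot theta ell alpha `&` [set p | B (phi p.1 p.2)]).

Definition family_measurable (xi : Omega -> nat -> nat) :=
  forall C, cyl_measurable C -> measurable (xi @^-1` C).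

Definition holder (P : probability Omega R) theta ell alpha
  (phi : Omega -> (nat -> nat) -> R) (k : nat) (r : R) (kappa : Omega -> R) :=
  [/\ 0 < r < 1, (forall w, 1 <= kappa w), measurable_fun setT kappa,
      (\int[P]_w (ln (kappa w))%:E < +oo)%E &
      {ae P, forall w j, (k <= j)%N -> (Var theta ell alpha phi w j <= (kappa w * r ^+ j)%:E)%E}].

Definition H2 (P : probability Omega R) theta thetainv ell alpha phi r kappa :=
  holder P theta ell alpha phi 2 r kappa /\
    (\int[P]_w logB thetainv kappa r w < +oo)%E.

Definition W1 (P : probability Omega R) ell (a : nat) : Prop :=
  (0 < P (Omega_sym ell a))%E.

(* topological mixing, witnessed by the random variables Nmix a b = N_ab *)
Definition top_mixing_with (P : probability Omega R) theta ell alpha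
  (Nmix : nat -> nat -> Omega -> nat) :=
  forall a b, W1 P ell a -> W1 P ell b ->
    (forall k, measurable [set w | Nmix a b w = k]) /\
    (forall w n, Omega_sym ell a w -> (Nmix a b w <= n)%N ->
       Omega_sym ell b (iter n theta w) ->
       exists x, Xfib theta ell alpha w x /\ x 0%N = a /\ x n = b).

Definition invertible_mpt_ergodic (P : probability Omega R) (theta thetainv : Omega -> Omega) :=
  [/\ cancel theta thetainv /\ cancel thetainv theta,
      measurable_fun setT theta, measurable_fun setT thetainv,
      (forall A, measurable A -> P (theta @^-1` A) = P A) &
      (forall A, measurable A -> theta @^-1` A = A -> P A = 0%E \/ P A = 1%E)].

Definition shift_data (P : probability Omega R) theta ell (alpha : Omega -> nat -> nat -> bool) :=
  [/\ (forall k, measurable (ell @^-1` [set k])),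
      (forall w, gt1_ell (ell w)),
      (forall i j, measurable [set w | alpha w i j]) &
      {ae P, forall w i, lt_ell (ell w) i ->
                exists j, lt_ell (ell (theta w)) j /\ alpha w i j}].

End Defs.

(* Concatenation (u, v) |-> u ++ v maps W^m_w(a,a) x W^n_{theta^m w}(a,a)
   injectively into W^{m+n}_w(a,a), and the (m+n)-step Birkhoff sum along the
   branch of u ++ v splits into the m-step sum along u at the point tau_v(xi)
   plus the n-step sum occurring in Z^{theta^m w}_n(a).  Replacing tau_v(xi) by
   xi_{theta^m w}, which also starts with a, moves the k-th term of the m-step
   sum by at most kappa(theta^k w) r^(m-k) since phi is 2-Hoelder, and these
   errors add up to at most log B_{theta^m w}.  The Hoelder bounds are needed
   along the whole forward orbit of w, which holds almost surely because theta
   preserves P. *)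

From HB Require Import structures.
From mathcomp Require Import all_boot all_order all_algebra.
From mathcomp Require Import all_classical all_reals all_analysis.
From mathcomp Require Import zify lra.
Import Order.TTheory GRing.Theory Num.Theory.
Local Open Scope classical_set_scope.
Local Open Scope ring_scope.

Section EsumProduct.
Context {R : realType}.
Local Open Scope ereal_scope.

Lemma le_esum_subset (T : choiceType) (A B : set T) (h : T -> \bar R) :
  A `<=` B -> (forall x, B x -> 0 <= h x) -> esum A h <= esum B h.
Proof.
move=> AB h0; apply: ge_ereal_sup => _ [X [finX XA] <-].
by apply: ereal_sup_ubound; exists X => //; split => //; apply: subset_trans AB.
Qed.

Lemma esumZl_le (T : choiceType) (S : set T) (h : T -> R) (c : R) :
  (0 <= c)%R -> (forall x, (0 <= h x)%R) ->
  esum S (fun x => (c * h x)%:E) <= c%:E * esum S (fun x => (h x)%:E).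
Proof.
move=> c0 h0; apply: ge_ereal_sup => _ [X [finX XS] <-].
under eq_fsbigr do rewrite EFinM.
rewrite -ge0_mule_fsumr; last by move=> i; rewrite lee_fin.
apply: lee_wpmul2l; first by rewrite lee_fin.
by apply: ereal_sup_ubound; exists X.
Qed.

Lemma esum_mul_le (T1 T2 : choiceType) (S1 : set T1) (S2 : set T2)
  (f : T1 -> R) (g : T2 -> R) (H : \bar R) :
  (forall i, (0 <= f i)%R) -> (forall j, (0 <= g j)%R) ->
  (forall A B, fsets S1 A -> fsets S2 B ->
     \sum_(i \in A) \sum_(j \in B) ((f i * g j)%:E) <= H) ->
  esum S1 (fun i => (f i)%:E) * esum S2 (fun j => (g j)%:E) <= H.
Proof.
move=> f0 g0 hyp.
have esum_ne0 (T : choiceType) (S : set T) (h : T -> R) :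
    [set \sum_(x \in A) (h x)%:E | A in fsets S] != set0.
  by apply/set0P; exists 0; exists set0; [exact: fsets_set0|rewrite fsbig_set0].
have fsum_mulE A B : (\sum_(i \in A) (f i)%:E) * (\sum_(j \in B) (g j)%:E)
   = \sum_(i \in A) \sum_(j \in B) ((f i * g j)%:E).
  rewrite ge0_mule_fsuml; last by move=> i; rewrite lee_fin.
  apply: eq_fsbigr => i _; rewrite ge0_mule_fsumr; last by move=> j; rewrite lee_fin.
  by apply: eq_fsbigr => j _; rewrite EFinM.
have fsum_mul_esum B : fsets S2 B ->
    (\sum_(j \in B) (g j)%:E) * esum S1 (fun i => (f i)%:E) <= H.
  move=> [finB BS]; rewrite fsumEFin // /esum -ereal_supZl ?esum_ne0 //; last first.
    by rewrite -lee_fin -fsumEFin //; apply: fsume_ge0 => j _; rewrite lee_fin.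
  apply: ge_ereal_sup => _ [x [A AS <-] <-].
  by rewrite -fsumEFin // muleC fsum_mulE; apply: hyp.
have H0 : 0 <= H.
  by apply: le_trans (hyp set0 set0 (fsets_set0 _) (fsets_set0 _)); rewrite fsbig_set0.
have F0 : 0 <= esum S1 (fun i => (f i)%:E) by apply: esum_ge0 => i _; rewrite lee_fin.
have G0 : 0 <= esum S2 (fun i => (g i)%:E) by apply: esum_ge0 => i _; rewrite lee_fin.
move: F0; case E: (esum S1 _) => [x| |] // x0.
  rewrite /esum -ereal_supZl ?esum_ne0 -?lee_fin //.
  apply: ge_ereal_sup => _ [y [B BS <-] <-].
  by rewrite muleC -E; apply: fsum_mul_esum.
move: G0; rewrite le_eqVlt => /orP[/eqP <-|Gpos]; first by rewrite mule0.
have [_ [B BS <-] Bpos] := ereal_sup_gt Gpos.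
have := fsum_mul_esum B BS; rewrite E gt0_muley // muleC gt0_muley // => ->.
Qed.

Lemma esum_mul_le_inj {T1 T2 T3 : choiceType}
  {S1 : set T1} {S2 : set T2} {S3 : set T3}
  {f : T1 -> R} {g : T2 -> R} {h : T3 -> R} (k : T1 * T2 -> T3) (c : R) :
  (0 <= c)%R -> (forall i, (0 <= f i)%R) -> (forall j, (0 <= g j)%R) ->
  (forall l, (0 <= h l)%R) ->
  set_inj (S1 `*` S2) k -> k @` (S1 `*` S2) `<=` S3 ->
  (forall i j, S1 i -> S2 j -> (f i * g j <= c * h (k (i, j)))%R) ->
  esum S1 (fun i => (f i)%:E) * esum S2 (fun j => (g j)%:E) <=
  c%:E * esum S3 (fun l => (h l)%:E).
Proof.
move=> c0 f0 g0 h0 kinj kS3 fgh; apply: esum_mul_le => // A B [finA AS] [finB BS].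
have ch0 l : 0 <= (c * h l)%:E by rewrite lee_fin mulr_ge0.
apply: (le_trans _ (esumZl_le _ S3 h c c0 h0)).
apply: (@le_trans _ _ (\sum_(i \in A) \sum_(j \in B) ((c * h (k (i, j)))%:E))).
  apply: lee_fsum => // i Ai; apply: lee_fsum => // j Bj.
  by rewrite lee_fin; apply: fgh; [apply: AS|apply: BS].
rewrite -esum_fset //; last by move=> i _; apply: fsume_ge0.
under eq_esum => i _ do rewrite -esum_fset //.
rewrite esum_esum // -[A `*`` _]/(A `*` B) -(esum_image _ _ (fun l => (c * h l)%:E)).
  apply: le_esum_subset => // _ [[i j] [/= /AS Si /BS Sj] <-].
  by apply: kS3; exists (i, j).
move=> [i j] [i' j']; rewrite !inE /= => -[Ai Bj] [Ai' Bj'] e.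
apply: kinj e; rewrite inE; split; [exact: AS|exact: BS|exact: AS|exact: BS].
Qed.

End EsumProduct.

Lemma iter_cancel (T : Type) (f g : T -> T) : cancel f g ->
  forall x m j, (j <= m)%N -> iter j g (iter m f x) = iter (m - j) f x.
Proof.
move=> fK x m; elim=> [|j IH] jm; first by rewrite subn0.
rewrite iterS IH ?(ltnW jm) //.
by rewrite -[(m - j)%N](@prednK _ _) ?subn_gt0 // -subnS iterS fK.
Qed.

Section Words.
Context {d : measure_display} {Omega : measurableType d} {R : realType}.
Variables (theta : Omega -> Omega) (ell : Omega -> option nat)
  (alpha : Omega -> nat -> nat -> bool).

Lemma tau_cat u v x : tau (u ++ v) x = tau u (tau v x).
Proof.
apply: funext => i; rewrite /tau size_cat nth_cat.
case: (ltnP i (size u)) => iu; first by rewrite ltn_addr.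
by rewrite ltn_subLR // subnDA.
Qed.

Lemma shiftk_tau u x : shiftk (size u) (tau u x) = x.
Proof. by apply: funext => i; rewrite /shiftk /tau ltnNge leq_addl /= addnK. Qed.

Lemma shiftk_shiftk m k x : shiftk k (shiftk m x) = shiftk (m + k) x.
Proof. by apply: funext => i; rewrite /shiftk -addnA (addnC k). Qed.

Lemma birkD (phi : Omega -> (nat -> nat) -> R) w m n x :
  birk theta phi w (m + n) x =
  birk theta phi w m x + birk theta phi (iter m theta w) n (shiftk m x).
Proof.
rewrite /birk big_split_ord /=; congr (_ + _); apply: eq_bigr => k _ /=.
by rewrite shiftk_shiftk addnC iterD addnC.
Qed.

Lemma Xfib_shiftk w x k : Xfib theta ell alpha w x ->
  Xfib theta ell alpha (iter k theta w) (shiftk k x).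
Proof. by move=> Xx i; rewrite /shiftk -iterD addSn; exact: Xx. Qed.

Lemma Xfib_tau w u x : (0 < size u)%N -> admissible theta ell alpha w u ->
  alpha (iter (size u).-1 theta w) (nth 0%N u (size u).-1) (x 0%N) ->
  Xfib theta ell alpha (iter (size u) theta w) x ->
  Xfib theta ell alpha w (tau u x).
Proof.
move=> u0 adm ux Xx i; rewrite /tau.
case: (ltnP i (size u)) => iu.
  have [ui uii] := adm i iu; split => //.
  case: (ltnP i.+1 (size u)) => iu1; first exact: uii.
  have -> : i = (size u).-1 by lia.
  by rewrite (_ : (size u).-1.+1 - size u = 0)%N //; lia.
rewrite ifN; last by rewrite -leqNgt; lia.
have [xi xii] := Xx (i - size u)%N.
by rewrite -iterD subnK // in xi xii; rewrite subSn.
Qed.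

Lemma Waa_cat w m n a u v : (0 < m)%N -> (0 < n)%N ->
  Waa theta ell alpha w m a u -> Waa theta ell alpha (iter m theta w) n a v ->
  Waa theta ell alpha w (m + n) a (u ++ v).
Proof.
move=> m0 n0 [su [admu [u0 ulast]]] [sv [admv [v0 vlast]]].
split; first by rewrite size_cat su sv.
split.
  move=> i; rewrite size_cat su sv => imn; rewrite !nth_cat su.
  case: (ltnP i m) => im.
    have iu : (i < size u)%N by rewrite su.
    have [ui uii] := admu i iu.
    split => // _; case: (ltnP i.+1 m) => im1; first by apply: uii; rewrite su.
    have ei : i = m.-1 by lia.
    by rewrite -ei in ulast; rewrite (_ : i.+1 - m = 0)%N ?v0 //; lia.
  have iv : (i - m < size v)%N by rewrite sv ltn_subLR.
  have [vi vii] := admv (i - m)%N iv.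
  rewrite -iterD subnK // in vi vii; split => // i1.
  by rewrite ltnNge (leqW im) /= subSn //; apply: vii; rewrite sv; lia.
split; first by rewrite nth_cat su m0.
rewrite (_ : (m + n).-1 = n.-1 + m)%N; last by lia.
by rewrite nth_cat su ltnNge leq_addl /= addnK iterD.
Qed.

Variables (phi : Omega -> (nat -> nat) -> R) (kappa : Omega -> R) (r : R).

Definition holder_along_orbit (w : Omega) : Prop :=
  forall k j, (2 <= j)%N -> (Var theta ell alpha phi (iter k theta w) j <=
                             (kappa (iter k theta w) * r ^+ j)%:E)%E.

Definition distortion_sum (w : Omega) (m : nat) : R :=
  \sum_(k < m) kappa (iter k theta w) * r ^+ (m - k).

Hypotheses (kappa_ge1 : forall w, 1 <= kappa w) (r_ge0 : 0 <= r) (r_le1 : r <= 1).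

(* After k shifts, two continuations of the same word of length m that both
   start with a agree on their first m - k + 1 coordinates. *)
Lemma birk_tau_le w m a u x y :
  holder_along_orbit w -> (0 < m)%N -> Waa theta ell alpha w m a u ->
  Xfib theta ell alpha (iter m theta w) x -> Xfib theta ell alpha (iter m theta w) y ->
  x 0%N = a -> y 0%N = a ->
  birk theta phi w m (tau u x) <= birk theta phi w m (tau u y) + distortion_sum w m.
Proof.
move=> hw m0 [su [adm [u0 ulast]]] Xx Xy x0 y0.
have Xtau z : Xfib theta ell alpha (iter m theta w) z -> z 0%N = a ->
    Xfib theta ell alpha w (tau u z).
  by move=> Xz z0; apply: Xfib_tau; rewrite ?su ?z0.
rewrite /birk /distortion_sum -big_split /=; apply: ler_sum => k _.
set W := iter k theta w; set X := shiftk k (tau u x); set Y := shiftk k (tau u y).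
have km := ltn_ord k.
have XY_Var : ((`|phi W X - phi W Y|)%:E <= Var theta ell alpha phi W (m - k).+1)%E.
  apply: ereal_sup_ubound; exists X, Y.
  split; first exact/Xfib_shiftk/Xtau.
  split; first exact/Xfib_shiftk/Xtau.
  split => // i ik; rewrite /X /Y /shiftk /tau su.
  by case: ltnP => // _; rewrite (_ : i + k - m = 0)%N ?x0 ?y0 //; lia.
have := le_trans XY_Var (hw k (m - k).+1 ltac:(lia)).
rewrite lee_fin exprS mulrCA => XY.
have qp0 : 0 <= kappa W * r ^+ (m - k).
  by rewrite mulr_ge0 ?exprn_ge0 // (le_trans _ (kappa_ge1 W)).
have := ler_wpM2r qp0 r_le1; rewrite mul1r.
have := ler_norm (phi W X - phi W Y); lra.
Qed.

Lemma birk_tau_cat_ge w m n a u v x y :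
  holder_along_orbit w -> (0 < m)%N -> (0 < n)%N ->
  Waa theta ell alpha w m a u -> Waa theta ell alpha (iter m theta w) n a v ->
  Xfib theta ell alpha (iter m theta w) y -> y 0%N = a ->
  Xfib theta ell alpha (iter (m + n) theta w) x -> x 0%N = a ->
  birk theta phi w m (tau u y) + birk theta phi (iter m theta w) n (tau v x) <=
  distortion_sum w m + birk theta phi w (m + n) (tau (u ++ v) x).
Proof.
move=> hw m0 n0 hu hv Xy y0 Xx x0.
have [su _] := hu; have [sv [admv [v0 vlast]]] := hv.
have Xv : Xfib theta ell alpha (iter m theta w) (tau v x).
  by apply: Xfib_tau; rewrite ?sv ?x0 // -iterD addnC.
have v0x : tau v x 0%N = a by rewrite /tau sv n0.
have := birk_tau_le w m a u y (tau v x) hw m0 hu Xy Xv y0 v0x.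
rewrite tau_cat birkD -su shiftk_tau; lra.
Qed.

Lemma logB_ge_distortion_sum (thetainv : Omega -> Omega) w m :
  cancel theta thetainv ->
  ((distortion_sum w m)%:E <= logB thetainv kappa r (iter m theta w))%E.
Proof.
move=> thetaK; rewrite /logB /distortion_sum.
apply: le_trans (nneseries_lim_ge (m := 1) m.+1 _); last first.
  by move=> n _ _; rewrite lee_fin mulr_ge0 ?exprn_ge0 // (le_trans _ (kappa_ge1 _)).
rewrite sumEFin lee_fin big_add1 /=.
rewrite -(big_mkord xpredT (fun k => kappa (iter k theta w) * r ^+ (m - k))).
rewrite big_nat_rev /= add0n le_eqVlt; apply/orP; left; apply/eqP.
by apply: eq_big_nat => k /andP[_ km]; rewrite -iterS iter_cancel // subKn.
Qed.

Lemma Zpart_mul_le (thetainv : Omega -> Omega) (xi : Omega -> nat -> nat) a w m n :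
  cancel theta thetainv -> holder_along_orbit w -> (0 < m)%N -> (0 < n)%N ->
  (forall w, Xfib theta ell alpha w (xi w)) ->
  xi (iter m theta w) 0%N = a -> xi (iter (m + n) theta w) 0%N = a ->
  (Zpart theta ell alpha phi xi a w m *
   Zpart theta ell alpha phi xi a (iter m theta w) n <=
   Bfac thetainv kappa r (iter m theta w) *
   Zpart theta ell alpha phi xi a w (m + n))%E.
Proof.
move=> thetaK hw m0 n0 Xxi xim ximn.
rewrite /Zpart -iterD addnC.
apply: (@le_trans _ _ ((expR (distortion_sum w m))%:E *
                        Zpart theta ell alpha phi xi a w (m + n))%E); last first.
  apply: lee_wpmul2r; first by apply: esum_ge0 => u _; rewrite lee_fin expR_ge0.
  by rewrite /Bfac (_ : (expR _)%:E = expeR (distortion_sum w m)%:E) // lee_expeR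
    logB_ge_distortion_sum.
apply: (esum_mul_le_inj (fun p => p.1 ++ p.2) _ (expR_ge0 _) (fun _ => expR_ge0 _)
          (fun _ => expR_ge0 _) (fun _ => expR_ge0 _)).
- move=> [u1 v1] [u2 v2] /[!inE] -[[su1 _] _] [[su2 _] _] /= /eqP.
  by rewrite eqseq_cat ?su1 ?su2 // => /andP[/eqP -> /eqP ->].
- by move=> _ [[u v] [/= hu hv] <-]; apply: Waa_cat.
move=> u v hu hv; rewrite -!expRD ler_expR.
exact: (birk_tau_cat_ge w m n a u v _ _ hw m0 n0 hu hv (Xxi _) xim (Xxi _) ximn).
Qed.

End Words.

Lemma ae_forall_iter {d : measure_display} {T : measurableType d} {R : realType}
  {mu : {measure set T -> \bar R}} {f : T -> T} {Q : T -> Prop} :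
  measurable_fun setT f -> (forall A, measurable A -> mu (f @^-1` A) = mu A) ->
  {ae mu, forall x, Q x} -> {ae mu, forall x, forall k, Q (iter k f x)}.
Proof.
move=> mf f_pres [N [mN N0 notQN]].
have iterN k : measurable (iter k f @^-1` N) /\ mu (iter k f @^-1` N) = 0%E.
  elim: k => [|k [mk Nk]] //.
  have -> : iter k.+1 f @^-1` N = f @^-1` (iter k f @^-1` N).
    by apply/seteqP; split=> x; rewrite /preimage /= -iterS iterSr.
  by split; [rewrite -[_ @^-1` _]setTI; apply: mf | rewrite f_pres].
apply: (negligibleS _ (negligible_bigcup (F := fun k => iter k f @^-1` N) _)).
  move=> x /= notQ; apply: contra_notP notQ => notN k.
  by apply: contrapT => notQk; apply: notN; exists k => //; apply: notQN.
by move=> k; have [? ?] := iterN k; exists (iter k f @^-1` N); split.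
Qed.

Theorem mainTheorem3 (d : measure_display) (Omega : measurableType d) (R : realType)
  (P : probability Omega R) (theta thetainv : Omega -> Omega)
  (ell : Omega -> option nat) (alpha : Omega -> nat -> nat -> bool)
  (phi : Omega -> (nat -> nat) -> R) (xi : Omega -> nat -> nat)
  (Nmix : nat -> nat -> Omega -> nat) (r : R) (kappa : Omega -> R) (a N : nat) :
  invertible_mpt_ergodic P theta thetainv ->
  shift_data P theta ell alpha ->
  potential_measurable theta ell alpha phi ->
  family_measurable xi ->
  (forall w, Omega_sym ell a w -> xi w 0%N = a) ->
  (forall w, Xfib theta ell alpha w (xi w)) ->
  top_mixing_with P theta ell alpha Nmix ->
  H2 P theta thetainv ell alpha phi r kappa ->
  W1 P ell a -> (0 < N)%N ->
  let Ostar := [set w | Omega_sym ell a w /\ (Nmix a a w <= N)%N] in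
  (0 < P Ostar)%E ->
  {ae P, forall w, Ostar w ->
     forall m n, (N <= m)%N -> (N <= n)%N ->
       Ostar (iter m theta w) -> Ostar (iter (m + n) theta w) ->
       (Zpart theta ell alpha phi xi a w m *
        Zpart theta ell alpha phi xi a (iter m theta w) n <=
        Bfac thetainv kappa r (iter m theta w) *
        Zpart theta ell alpha phi xi a w (m + n))%E}.
Proof.
move=> [[thetaK _] mtheta _ theta_pres _] _ _ _ xi_a Xxi _
  [[/andP[r_gt0 r_lt1] kappa_ge1 _ _ holder_ae] _] _ N_gt0 Ostar _.
have := ae_forall_iter mtheta theta_pres holder_ae.
apply: filterS => w holder_w _ m n Nm Nn [a_m _] [a_mn _].
apply: (Zpart_mul_le _ _ _ _ _ _ kappa_ge1 (ltW r_gt0) (ltW r_lt1) _ _ _ _ _ _ thetaK)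
  => //.
- exact: leq_trans N_gt0 Nm.
- exact: leq_trans N_gt0 Nn.
- exact: xi_a.
- exact: xi_a.
Qed.
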